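(* For any $n\ge 1$, the $h$-polynomial of $(\mathsf{Tr}(n),\preccurlyeq)$ is $$\mathrm{d}_{\mathsf{Tr}(n)}(1,y)=(y+1)^{n-2}\left(y^2+(n+1)y+1\right).$$
   Context: A triword of size $n$ is a word $u=u_1\cdots u_n$ with $u_i\in\{0,1,2\}$, $u_1\ne 2$, and such that $u_i=0$ implies $u_j\neq 1$ for all $j>i$; $\mathsf{Tr}(n)$ is their set, ordered componentwise ($u\preccurlyeq v$ iff $u_i\le v_i$ for all $i$). For a finite poset $\mathcal{P}$, its degree polynomial is $\mathrm{d}_{\mathcal{P}}(x,y)=\sum_{u\in\mathcal{P}}x^{\mathrm{in}(u)}y^{\mathrm{out}(u)}$, where $\mathrm{in}(u)$ (resp. $\mathrm{out}(u)$) is the number of elements covered by (resp. covering) $u$; its $h$-polynomial is $\mathrm{d}_{\mathcal{P}}(1,y)$. (For $n=1$ the formula is read as the rational expression, equal to $y+1$.) *)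

From HB Require Import structures.
From mathcomp Require Import all_boot all_order all_algebra.
Set Implicit Arguments. Unset Strict Implicit. Unset Printing Implicit Defensive.
Import GRing.Theory.

(* A word of size n over {0,1,2}: u_i is u (i-1) (0-indexed positions). *)
Definition word (n : nat) := {ffun 'I_n -> 'I_3}.

Definition is_triword (n : nat) (u : word n) : bool :=
  [forall i : 'I_n, (val i == 0%N) ==> (val (u i) != 2%N)] &&
  [forall i : 'I_n, forall j : 'I_n,
     ((i < j)%N && (val (u i) == 0%N)) ==> (val (u j) != 1%N)].

Definition wle (n : nat) (u v : word n) : bool :=
  [forall i : 'I_n, (val (u i) <= val (v i))%N].
Definition wlt (n : nat) (u v : word n) : bool := (u != v) && wle u v.

Definition tr_covers (n : nat) (u v : word n) : bool :=
  [&& is_triword u, is_triword v, wlt u v &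
      [forall w : word n, ~~ [&& is_triword w, wlt u w & wlt w v]]].

Definition tr_out (n : nat) (u : word n) : nat :=
  #|[set v : word n | tr_covers u v]|.

Definition tr_in (n : nat) (u : word n) : nat :=
  #|[set v : word n | tr_covers v u]|.

(* h-polynomial d_{Tr(n)}(1,y) = sum_{u in Tr(n)} 1^{in(u)} y^{out(u)} *)
Definition tr_hpoly (n : nat) : {poly int} :=
  \sum_(u : word n | is_triword u) (1 ^+ tr_in u * 'X ^+ tr_out u).

(* The elements covering a triword u are obtained by raising a single letter:
   u_i becomes 1 if it is the first 0 of u, and 2 otherwise.  This is possible
   exactly at the positions i with u_i <> 2, except when u_1 = 1, so out(u) is
   the number of raisable positions of u.  Let H_n be the h-polynomial and Z_n
   the same sum over the triwords without 0 (the words 1{1,2}^(n-1)), so that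
   Z_(n+1) = (y + 1)^n.  Appending a last letter 0, 2 or 1 to a triword gives
   H_(n+2) = (y + 1) H_(n+1) + y Z_(n+1), and the closed form follows by
   induction. *)

From HB Require Import structures.
From mathcomp Require Import all_boot all_order all_algebra.
From mathcomp Require Import zify ring.
Import GRing.Theory.
Set Implicit Arguments. Unset Strict Implicit.

Section RconsFfun.

Variable A : Type.

Definition rcons_ffun n (u : {ffun 'I_n -> A}) (c : A) : {ffun 'I_n.+1 -> A} :=
  [ffun i => if unlift ord_max i is Some j then u j else c].

Lemma rcons_ffun_lift n (u : {ffun 'I_n -> A}) c j :
  rcons_ffun u c (lift ord_max j) = u j.
Proof. by rewrite ffunE liftK. Qed.

Lemma rcons_ffun_max n (u : {ffun 'I_n -> A}) c : rcons_ffun u c ord_max = c.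
Proof. by rewrite ffunE unlift_none. Qed.

End RconsFfun.

Lemma widen_ord_max n (j : 'I_n) : widen_ord (leqnSn n) j = lift ord_max j.
Proof. by apply: val_inj; rewrite [RHS]lift_max. Qed.

Lemma forall_ord_recr n (P : pred 'I_n.+1) :
  [forall i, P i] = [forall j : 'I_n, P (lift ord_max j)] && P ord_max.
Proof.
apply/forallP/andP => [P_all | [/forallP P_lift P_max] i].
  by split; [apply/forallP => j|]; apply: P_all.
by case: (unliftP ord_max i) => [j ->|->].
Qed.

Lemma exists_ord_recr n (P : pred 'I_n.+1) :
  [exists i, P i] = [exists j : 'I_n, P (lift ord_max j)] || P ord_max.
Proof. by apply: negb_inj; rewrite negb_or !negb_exists forall_ord_recr. Qed.

Lemma sum_ffun_rcons (R : nmodType) (A : finType) n (F : {ffun 'I_n.+1 -> A} -> R) :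
  (\sum_v F v = \sum_(u : {ffun 'I_n -> A}) \sum_(c : A) F (rcons_ffun u c))%R.
Proof.
rewrite pair_big /= (reindex (fun p => rcons_ffun p.1 p.2)) //.
exists (fun v : {ffun 'I_n.+1 -> A} => ([ffun j => v (lift ord_max j)], v ord_max)).
  move=> [u c] _ /=; congr pair; last exact: rcons_ffun_max.
  by apply/ffunP => j; rewrite ffunE rcons_ffun_lift.
move=> v _; apply/ffunP => i.
by case: (unliftP ord_max i) => [j|] ->; rewrite ?rcons_ffun_max ?rcons_ffun_lift ?ffunE.
Qed.

Lemma val_lift_max n (j : 'I_n) : val (lift ord_max j) = val j.
Proof. exact: lift_max. Qed.

Definition has_zero n (u : word n) : bool := [exists i, val (u i) == 0].

Lemma has_zero_rcons n (u : word n) c :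
  has_zero (rcons_ffun u c) = has_zero u || (val c == 0).
Proof.
rewrite /has_zero exists_ord_recr rcons_ffun_max.
by congr orb; apply: eq_existsb => j; rewrite rcons_ffun_lift.
Qed.

Lemma triword_rcons n (u : word n) c :
  is_triword (rcons_ffun u c) =
  [&& is_triword u, (val c == 1) ==> ~~ has_zero u & (n == 0) ==> (val c != 2)].
Proof.
apply/idP/and3P => [/andP[/forallP first_ne2 /forallP no_one_after_zero] |
                    [/andP[/forallP u_first /forallP u_after] c_one c_first]].
  split.
  - apply/andP; split; apply/forallP => i.
      by have := first_ne2 (lift ord_max i); rewrite val_lift_max rcons_ffun_lift.
    apply/forallP => j.
    have /forallP/(_ (lift ord_max j)) := no_one_after_zero (lift ord_max i).
    by rewrite !val_lift_max !rcons_ffun_lift.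
  - apply/implyP => c1; apply/existsP => -[j uj0].
    have /forallP/(_ ord_max) := no_one_after_zero (lift ord_max j).
    by rewrite val_lift_max rcons_ffun_lift rcons_ffun_max ltn_ord uj0 c1.
  - by apply/implyP => /eqP n0; have := first_ne2 ord_max; rewrite rcons_ffun_max n0.
apply/andP; split; apply/forallP => i.
  case: (unliftP ord_max i) => [j|] ->; last by rewrite rcons_ffun_max.
  by rewrite val_lift_max rcons_ffun_lift.
apply/forallP => k; case: (unliftP ord_max k) => [l|] ->.
  case: (unliftP ord_max i) => [j|] ->.
    by rewrite !val_lift_max !rcons_ffun_lift; have /forallP := u_after j; apply.
  by rewrite val_lift_max /= ltnNge (ltnW (ltn_ord l)).
case: (unliftP ord_max i) => [j|] ->; last by rewrite ltnn.
rewrite val_lift_max rcons_ffun_lift rcons_ffun_max ltn_ord /=.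
apply/implyP => uj0; apply/negP => c1; move/implyP: c_one => /(_ c1)/negP; apply.
by apply/existsP; exists j.
Qed.

Lemma eq_word n (u v : word n) : (forall i, val (u i) = val (v i)) -> u = v.
Proof. by move=> uv; apply/ffunP => i; apply/val_inj/uv. Qed.

Lemma wlt_between_single n (u v w : word n) (i : 'I_n) :
    (forall j, j != i -> u j = v j) -> wlt u w -> wlt w v ->
  (forall j, j != i -> w j = u j) /\ (val (u i) < val (w i) < val (v i)).
Proof.
move=> uv /andP[uw /forallP le_uw] /andP[wv /forallP le_wv].
have w_out j : j != i -> w j = u j.
  move=> ji; apply: val_inj; have := le_uw j; have := le_wv j.
  by rewrite (uv j ji); lia.
split=> //; rewrite !ltn_neqAle le_uw le_wv !andbT.
apply/andP; split.
  apply: contraNneq uw => ui; apply/eqP/eq_word => j.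
  by case: (eqVneq j i) => [->|/w_out->].
apply: contraNneq wv => wi; apply/eqP/eq_word => j.
by case: (eqVneq j i) => [->|ji] //; rewrite w_out // uv.
Qed.

Definition raisable (k x : nat) : bool := (x != 2) && ((k == 0) ==> (x != 1)).

Definition no_zero_before n (u : word n) (i : 'I_n) : bool :=
  [forall j : 'I_n, (j < i) ==> (val (u j) != 0)].

Definition raised_letter n (u : word n) (i : 'I_n) : 'I_3 :=
  if (val (u i) == 0) && no_zero_before u i then @Ordinal 3 1 erefl
  else @Ordinal 3 2 erefl.

Definition raise n (u : word n) (i : 'I_n) : word n :=
  [ffun j => if j == i then raised_letter u i else u j].

Section Raise.

Variables (n : nat) (u : word n) (i : 'I_n).
Hypothesis raisable_i : raisable i (u i).

Lemma raise_at : raise u i i = raised_letter u i.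
Proof. by rewrite ffunE eqxx. Qed.

Lemma raise_out j : j != i -> raise u i j = u j.
Proof. by rewrite ffunE => /negPf->. Qed.

Lemma raised_letter_gt : val (u i) < val (raised_letter u i).
Proof.
move: raisable_i; rewrite /raisable /raised_letter.
by case: ifP => [/andP[/eqP-> _]|_] //=; have := ltn_ord (u i); lia.
Qed.

Lemma wlt_raise : wlt u (raise u i).
Proof.
apply/andP; split.
  by apply: contraTneq raised_letter_gt => {1}->; rewrite raise_at ltnn.
apply/forallP => j; case: (eqVneq j i) => [->|ji]; last by rewrite raise_out.
by rewrite raise_at ltnW // raised_letter_gt.
Qed.

Lemma triword_raise : is_triword u -> is_triword (raise u i).
Proof.
case/andP => /forallP u_first /forallP u_after.
apply/andP; split; apply/forallP => k.
  case: (eqVneq k i) => [->|ki]; last by rewrite raise_out.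
  apply/implyP => first_i; rewrite raise_at /raised_letter.
  have -> : no_zero_before u i by apply/forallP => j; rewrite (eqP first_i) ltn0.
  move: raisable_i; rewrite /raisable first_i /=.
  by case: ifP => //; have := ltn_ord (u i); lia.
apply/forallP => l; case: (eqVneq k i) => [->|ki].
  by rewrite raise_at eqn0Ngt (leq_ltn_trans (leq0n _) raised_letter_gt) andbF.
case: (eqVneq l i) => [->|li]; last first.
  by rewrite !raise_out //; have /forallP := u_after k; apply.
rewrite raise_at raise_out // /raised_letter.
apply/implyP => /andP[lt_ki uk0]; case: ifP => // /andP[_ /forallP/(_ k)].
by rewrite lt_ki uk0.
Qed.

Lemma covers_raise : is_triword u -> tr_covers u (raise u i).
Proof.
move=> tw_u; rewrite /tr_covers tw_u triword_raise // wlt_raise //=.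
apply/forallP => w; apply/negP => /and3P[tw_w lt_uw lt_wv].
have [w_out /andP[]] :=
  wlt_between_single (fun j ji => esym (raise_out ji)) lt_uw lt_wv.
rewrite raise_at /raised_letter; case: ifP => [_ /=|not_first /=]; first lia.
move=> lt_ui lt_iv.
have ui0 : u i = 0 :> nat by lia.
move: not_first => /=; rewrite ui0 eqxx /= => /negbT/forallPn[j].
rewrite negb_imply negbK => /andP[lt_ji /eqP uj0].
have ji : j != i by rewrite neq_ltn lt_ji.
case/andP: tw_w => _ /forallP/(_ j)/forallP/(_ i).
by rewrite lt_ji w_out // uj0 /= => /eqP; lia.
Qed.

End Raise.

Lemma wlt_exists_lt n (u v : word n) : wlt u v -> exists i, val (u i) < val (v i).
Proof.
case/andP => neq_uv /forallP le_uv; apply/existsP; apply: contraNT neq_uv.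
rewrite negb_exists => /forallP not_lt; apply/eqP/eq_word => i.
by have := le_uv i; have := not_lt i; lia.
Qed.

Lemma wle_raise_first_increase n (u v : word n) (i : 'I_n) :
    is_triword v -> wle u v -> val (u i) < val (v i) ->
    (forall j : 'I_n, j < i -> val (v j) = val (u j)) ->
  wle (raise u i) v.
Proof.
move=> tw_v /forallP le_uv /= lt_i same_before; apply/forallP => j.
case: (eqVneq j i) => [->|ji]; last by rewrite raise_out.
rewrite raise_at /raised_letter; case: ifP => [_|not_first] /=; first lia.
have [u1|u0] : u i = 1 :> nat \/ u i = 0 :> nat by have := ltn_ord (v i); lia.
  by have := ltn_ord (v i); lia.
move: not_first => /=; rewrite u0 eqxx /= => /negbT/forallPn[m].
rewrite negb_imply negbK => /andP[lt_mi /eqP /= um0].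
case/andP: tw_v => _ /forallP/(_ m)/forallP/(_ i) /=.
by rewrite lt_mi same_before // um0 /= => /eqP; lia.
Qed.

Lemma covers_raiseP n (u v : word n) :
  tr_covers u v -> exists2 i : 'I_n, raisable i (u i) & v = raise u i.
Proof.
case/and4P => tw_u tw_v lt_uv /forallP v_min.
have [i0 lt_i0] := wlt_exists_lt lt_uv.
case: (@arg_minnP _ i0 (fun i => val (u i) < val (v i)) val lt_i0) => i lt_i min_i.
have same_before (j : 'I_n) : j < i -> val (v j) = val (u j).
  move=> lt_ji; case/andP: lt_uv => _ /forallP/(_ j).
  by rewrite leq_eqVlt => /orP[/eqP -> //|/min_i /=]; lia.
have raisable_i : raisable i (u i).
  rewrite /raisable; have := ltn_ord (v i); move: lt_i => /= lt_i v_lt3.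
  apply/andP; split; first lia.
  apply/implyP => first_i.
  by case/andP: tw_v => /forallP/(_ i) /=; rewrite first_i /=; lia.
exists i => //; apply/esym/eqP.
have := v_min (raise u i).
rewrite triword_raise // wlt_raise //= /wlt wle_raise_first_increase // ?andbT ?negbK //.
by case/andP: lt_uv.
Qed.

Lemma raise_inj n (u : word n) :
  {in [pred i : 'I_n | raisable i (u i)] &, injective (raise u)}.
Proof.
move=> i j _ rj eq_ij; apply: contraTeq (raised_letter_gt rj) => ij.
have ji : j != i by rewrite eq_sym.
by rewrite -raise_at -eq_ij raise_out // ltnn.
Qed.

Definition nraisable n (u : word n) : nat := \sum_(i < n) raisable i (u i).

Lemma tr_out_raisable n (u : word n) : is_triword u -> tr_out u = nraisable u.
Proof.
move=> tw_u; rewrite /tr_out.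
have -> : [set v | tr_covers u v] = raise u @: [set i : 'I_n | raisable i (u i)].
  apply/setP => v; rewrite inE; apply/idP/imsetP => [/covers_raiseP[i ri ->]|[i]].
    by exists i; rewrite ?inE.
  by rewrite inE => ri ->; apply: covers_raise.
rewrite card_in_imset => [|i j]; last by rewrite !inE; apply: raise_inj.
rewrite -sum1_card big_mkcond /=; apply: eq_bigr => i _.
by rewrite inE; case: raisable.
Qed.

Lemma nraisable_rcons n (u : word n) c :
  nraisable (rcons_ffun u c) = nraisable u + raisable n c.
Proof.
rewrite /nraisable big_ord_recr /= rcons_ffun_max; congr addn.
by apply: eq_bigr => j _; rewrite widen_ord_max rcons_ffun_lift.
Qed.

Lemma triword_word0 (u : word 0) : is_triword u.
Proof. by apply/andP; split; apply/forallP => -[]. Qed.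

Lemma has_zero_word0 (u : word 0) : has_zero u = false.
Proof. by apply/existsP => -[[]]. Qed.

Local Open Scope ring_scope.

Lemma tr_hpolyE n :
  tr_hpoly n = \sum_(u : word n | is_triword u) 'X ^+ nraisable u.
Proof.
by apply: eq_bigr => u tw_u; rewrite expr1n mul1r tr_out_raisable.
Qed.

Definition zerofree_poly n : {poly int} :=
  \sum_(u : word n | is_triword u && ~~ has_zero u) 'X ^+ nraisable u.

Lemma tr_hpoly1 : tr_hpoly 1 = 'X + 1.
Proof.
rewrite tr_hpolyE big_mkcond sum_ffun_rcons (eq_bigr (fun=> 'X + 1)) => [|u _].
  by rewrite sumr_const card_ffun !card_ord.
rewrite !big_ord_recl big_ord0 !triword_rcons !nraisable_rcons.
by rewrite triword_word0 has_zero_word0 /nraisable big_ord0 /= !add0n expr1 expr0 !addr0.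
Qed.

Lemma zerofree_poly1 : zerofree_poly 1 = 1.
Proof.
rewrite /zerofree_poly big_mkcond sum_ffun_rcons (eq_bigr (fun=> 1)) => [|u _].
  by rewrite sumr_const card_ffun !card_ord.
rewrite !big_ord_recl big_ord0 !triword_rcons !has_zero_rcons !nraisable_rcons.
by rewrite triword_word0 has_zero_word0 /nraisable big_ord0 /= add0n expr0 add0r !addr0.
Qed.

Lemma tr_hpolyS n :
  tr_hpoly n.+2 = ('X + 1) * tr_hpoly n.+1 + 'X * zerofree_poly n.+1.
Proof.
rewrite !tr_hpolyE /zerofree_poly !mulr_sumr big_mkcond [in RHS]big_mkcond.
rewrite [X in _ = _ + X]big_mkcond sum_ffun_rcons -big_split.
apply: eq_bigr => u _; rewrite !big_ord_recl big_ord0 !triword_rcons !nraisable_rcons /=.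
by case: is_triword; case: has_zero; rewrite /= ?addn0 ?addn1 ?exprS; ring.
Qed.

Lemma zerofree_polyS n : zerofree_poly n.+2 = ('X + 1) * zerofree_poly n.+1.
Proof.
rewrite /zerofree_poly mulr_sumr big_mkcond [in RHS]big_mkcond sum_ffun_rcons.
apply: eq_bigr => u _.
rewrite !big_ord_recl big_ord0 !triword_rcons !has_zero_rcons !nraisable_rcons /=.
by case: is_triword; case: has_zero; rewrite /= ?addn0 ?addn1 ?exprS; ring.
Qed.

Lemma zerofree_polyE n : zerofree_poly n.+1 = ('X + 1) ^+ n.
Proof. by elim: n => [|n IH]; rewrite ?zerofree_poly1 // zerofree_polyS IH exprS. Qed.

Lemma tr_hpoly_closed n :
  tr_hpoly n.+2 = ('X + 1) ^+ n * ('X ^+ 2 + n.+3%:R *: 'X + 1).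
Proof.
elim: n => [|n IH]; rewrite tr_hpolyS ?tr_hpoly1 ?IH zerofree_polyE !scaler_nat.
  by rewrite expr0 mul1r; ring.
by rewrite !exprS; ring.
Qed.

Theorem proposition3p3 (n : nat) (hn : (1 <= n)%N) :
  (('X + 1) ^+ 2 * tr_hpoly n =
     ('X + 1) ^+ n * ('X ^+ 2 + (n.+1)%:R *: 'X + 1) :> {poly int}) /\
  ((2 <= n)%N ->
     tr_hpoly n = ('X + 1) ^+ (n - 2) * ('X ^+ 2 + (n.+1)%:R *: 'X + 1)) /\
  (n = 1%N -> tr_hpoly n = 'X + 1).
Proof.
case: n hn => [//|[_|n _]].
  by rewrite tr_hpoly1 scaler_nat; split => //; ring.
rewrite tr_hpoly_closed subn2; split => //.
by rewrite mulrA -exprD.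
Qed.
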